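(* In the setting below: (i) $C_0$ is a unital $K$-subalgebra of $C$ with identity element $w=\sum_{e\in G_0}\big(\sum_{f\in G_0}1_f\#\sum_{h\in T_f\cap S_e}v_h\big)\delta_e$. (ii) The elements $w_e:=\big(\sum_{f\in G_0}1_f\#\sum_{h\in T_f\cap S_e}v_h\big)\delta_e$, $e\in G_0$, are central orthogonal idempotents of $C_0$ whose sum is $w$. (iii) $C_0=\bigoplus_{e\in G_0}C_e$, where $C_e:=C_0w_e=\bigoplus_{g\in G_e}\Big(\bigoplus_{l,k:\ r(l)=d(l)=r(k),\ d(k)=e}A_l\#v_k\Big)\delta_g$ is an ideal of $C_0$ which is a unital algebra with identity $w_e$.
   Context: Groupoid conventions. A groupoid is a small category with all morphisms invertible, regarded as the set $G$ of morphisms. For $g\in G$ we have $d(g)=g^{-1}g$ and $r(g)=gg^{-1}$. The product $gh$ is defined iff $d(g)=r(h)$, and then $d(gh)=d(h)$, $r(gh)=r(g)$. $G^2=\{(g,h):d(g)=r(h)\}$, and $G_0$ is the set of identities. For $e\in G_0$: - $G_e=\{g:d(g)=r(g)=e\}$; - $S_e=\{g: d(g)=e\}$; - $T_e=\{g: r(g)=e\}$. Actions. An action of $G$ on a ring $R$ is a pair $\beta=(\{E_g\},\{\beta_g\})$ where each $E_g=E_{r(g)}$ is an ideal of $R$, each $\beta_g:E_{g^{-1}}\to E_g$ is a ring isomorphism, $\beta_e=\mathrm{id}$ for $e\in G_0$, and $\beta_g\beta_h=\beta_{gh}$ on $E_{h^{-1}}$ for $(g,h)\in G^2$. The skew groupoid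 ring is $R\star_\beta G=\bigoplus_g E_g\delta_g$ with $(x\delta_g)(y\delta_h)=x\beta_g(y)\delta_{gh}$ if $(g,h)\in G^2$ and $0$ otherwise. $KG^*$. The free $K$-module with basis $\{v_g\}$, with $v_gv_h=\delta_{g,h}v_g$. Setting. $K$ is a commutative unital ring and $G$ is a finite groupoid. $A=\bigoplus_{g\in G}A_g$ is a unital $G$-graded $K$-algebra ($A_gA_h\subseteq A_{gh}$ if $(g,h)\in G^2$, and $0$ otherwise). Known facts: $1_A=\sum_{e\in G_0}1_e$ with $1_e\in A_e$ an identity element of $A_e$ (possibly $0$), and $1_ea=a$ for $a\in A_g$ with $r(g)=e$, $a1_e=a$ for $a\in A_g$ with $d(g)=e$. $KG^*$ acts on $A$ by $v_h\cdot a=a_h$ (the $h$-component). $B=A\#KG^*=A\otimes_K KG^*$ with $(a\#v_g)(b\#v_h)=a(v_{gh^{-1}}\cdot b)\#v_h$ if $d(g)=d(h)$, and $0$ otherwise. $G$ acts on $B$ by $\beta=(\{E_g\},\{\beta_g\})$ with $E_g=\bigoplus_{l,k\in G,\ d(k)=r(g)}A_l\#v_k$ and $\beta_g(a_l\#v_k)=a_l\#v_{kg^{-1}}$. Let $C=B\star_\beta G$, and $$C_0=\bigoplus_{e\in G_0}\bigoplus_{g\in G_e}\Big(\bigoplus_{l,k\in G:\ r(l)=d(l)=r(k),\ d(k)=e}A_l\#v_k\Big)\delta_g.$$ *)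

From HB Require Import structures.
From mathcomp Require Import all_boot all_order all_algebra.
Set Implicit Arguments. Unset Strict Implicit. Unset Printing Implicit Defensive.
Import GRing.Theory.
Local Open Scope ring_scope.

(* morphisms invertible.  [gmul g h] is only meaningful when d g = r h.    *)
Record finGroupoid := FinGroupoid {
  gcarrier :> finType;
  gd : gcarrier -> gcarrier;
  gr : gcarrier -> gcarrier;
  gmul : gcarrier -> gcarrier -> gcarrier;
  ginv : gcarrier -> gcarrier;
  gd_mul : forall g h, gd g = gr h -> gd (gmul g h) = gd h;
  gr_mul : forall g h, gd g = gr h -> gr (gmul g h) = gr g;
  gmulA : forall g h k, gd g = gr h -> gd h = gr k ->
            gmul (gmul g h) k = gmul g (gmul h k);
  gd_d : forall g, gd (gd g) = gd g;
  gr_d : forall g, gr (gd g) = gd g;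
  gd_r : forall g, gd (gr g) = gr g;
  gr_r : forall g, gr (gr g) = gr g;
  gmul_d : forall g, gmul g (gd g) = g;
  gmul_r : forall g, gmul (gr g) g = g;
  gd_inv : forall g, gd (ginv g) = gr g;
  gr_inv : forall g, gr (ginv g) = gd g;
  gmulVg : forall g, gmul (ginv g) g = gd g;
  gmulgV : forall g, gmul g (ginv g) = gr g
}.

Section Defs.
Variable G : finGroupoid.
Local Notation d := (@gd G).
Local Notation r := (@gr G).
Local Notation mul := (@gmul G).
Local Notation inv := (@ginv G).

Definition isid (e : G) : bool := d e == e.

Variables (K : comPzRingType) (A : algType K).

(* A G-grading of A = (+)_g A_g, given by the family of projections
   comp g : A -> A onto the homogeneous components A_g
   (A_g = { a | comp g a = a }).                                           *)
Record grading := Grading {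
  gcomp : G -> A -> A;
  compD : forall g a b, gcomp g (a + b) = gcomp g a + gcomp g b;
  compZ : forall g (k : K) a, gcomp g (k *: a) = k *: gcomp g a;
  comp_sum : forall a, a = \sum_(g : G) gcomp g a;
  comp_comp : forall g h a, gcomp g (gcomp h a) = if g == h then gcomp h a else 0;
  comp_mul : forall g h a b, gcomp g a = a -> gcomp h b = b ->
     if d g == r h then gcomp (mul g h) (a * b) = a * b else a * b = 0
}.

Variable gr : grading.
Local Notation comp := (gcomp gr).

(* B = A # KG^*, modelled as A (x) KG^* = functions G -> A,
   a # v_k  |->  the function with value a at k, 0 elsewhere. *)
Definition Bt := {ffun G -> A}.
Definition tens (a : A) (k : G) : Bt := [ffun k' => if k' == k then a else 0].

(* (a#v_g)(b#v_h) = a (v_{g h^-1} . b) # v_h if d g = d h, 0 otherwise *)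
Definition bmul (x y : Bt) : Bt :=
  [ffun h => \sum_(g : G | d g == d h) x g * comp (mul g (inv h)) (y h)].

(* E_g = (+)_{l,k : d k = r g} A_l # v_k *)
Definition inE (g : G) (x : Bt) : Prop := forall k, d k <> r g -> x k = 0.

(* beta_g (a # v_k) = a # v_{k g^-1}, on E_{g^-1} *)
Definition beta (g : G) (x : Bt) : Bt :=
  [ffun k => if d k == r g then x (mul k g) else 0].

(* C = B *_beta G = (+)_g E_g delta_g, modelled as functions G -> B *)
Definition Ct := {ffun G -> Bt}.
Definition delta (b : Bt) (g : G) : Ct := [ffun g' => if g' == g then b else 0].
Definition inC (c : Ct) : Prop := forall g, inE g (c g).

(* (x delta_g)(y delta_h) = x beta_g(y) delta_{gh} if d g = r h, else 0 *)
Definition cmul (x y : Ct) : Ct :=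
  [ffun t => \sum_(g : G) \sum_(h : G | (d g == r h) && (mul g h == t))
                bmul (x g) (beta g (y h))].

(* C_0 = (+)_{e in G_0} (+)_{g in G_e}
          ((+)_{l,k : r l = d l = r k, d k = e} A_l # v_k) delta_g *)
Definition inC0 (c : Ct) : Prop :=
  forall g k l,
    ~ [/\ d g = r g, d k = d g, r l = d l & d l = r k] ->
    comp l (c g k) = 0.

(* w_e = (sum_{f in G_0} 1_f # sum_{h in T_f cap S_e} v_h) delta_e ,
   with 1_f = comp f 1 *)
Definition w_ (e : G) : Ct :=
  delta (\sum_(f : G | isid f) \sum_(h : G | (r h == f) && (d h == e))
           tens (comp f 1) h) e.

Definition w : Ct := \sum_(e : G | isid e) w_ e.

Definition inCe (e : G) (c : Ct) : Prop :=
  exists x, inC0 x /\ c = cmul x (w_ e).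

End Defs.

From HB Require Import structures.
From mathcomp Require Import all_boot all_order all_algebra.
Set Implicit Arguments. Unset Strict Implicit. Unset Printing Implicit Defensive.
Import GRing.Theory.
Local Open Scope ring_scope.

(* An element c of C is a function G -> G -> A, c g k being the coefficient of
   (_ # v_k) delta_g.  For a set P of
   identities, the "diagonal unit"
       u_P = sum_{e in P} (sum_f 1_f # sum_{r h = f, d h = e} v_h) delta_e
   acts on C_0 as a projection on supports:
       (u_P c) t = [r t \in P] c t     and     (c u_P) t = [d t \in P] c t.
   This follows from the local unit laws 1_{r m} a = a = a 1_{d m} (a in A_m) of a
   groupoid grading together with the support conditions defining C_0.  Both
   w (P = G_0) and w_e (P = {e}) are diagonal units, so (i) and (ii) reduce to
   comparing coefficients, and C_e = C_0 w_e is the set of elements of C_0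
   supported on {g | d g = e}, from which (iii) is bookkeeping on supports. *)

Section GroupoidFacts.
Variable G : finGroupoid.
Local Notation d := (@gd G).
Local Notation r := (@gr G).
Local Notation gm := (@gmul G).
Local Notation iv := (@ginv G).

Lemma isid_d g : isid (d g).
Proof. by rewrite /isid gd_d. Qed.

Lemma isid_r g : isid (r g).
Proof. by rewrite /isid gd_r. Qed.

Lemma isid_rE e : isid e -> r e = e.
Proof. by move/eqP=> de; rewrite -{1}de gr_d de. Qed.

Lemma gmul_cancell g h : d g = r h -> gm g h = h -> g = r h.
Proof.
move=> E M.
by rewrite -[g]gmul_d E -{1}(gmulgV h) -gmulA ?M ?gmulgV // gr_inv.
Qed.

Lemma gmul_cancelr g h : d g = r h -> gm g h = g -> h = d g.
Proof.
move=> E M; have := congr1 (gm (iv g)) M.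
by rewrite -gmulA ?gd_inv // !gmulVg E gmul_r.
Qed.

Lemma gdivK k h : d k = d h -> gm (gm k (iv h)) h = k.
Proof. by move=> E; rewrite gmulA ?gd_inv ?gr_inv // gmulVg -E gmul_d. Qed.

Lemma gdiv_eq_r k h : d k = d h -> gm k (iv h) = r h -> k = h.
Proof. by move=> E M; rewrite -(gdivK E) M gmul_r. Qed.

End GroupoidFacts.

Section LocalUnits.
Variables (G : finGroupoid) (K : comPzRingType) (A : algType K) (grd : grading G A).
Local Notation d := (@gd G).
Local Notation r := (@gr G).
Local Notation gm := (@gmul G).
Local Notation iv := (@ginv G).
Local Notation comp := (gcomp grd).

Lemma comp0 g : comp g 0 = 0.
Proof. by apply/(addrI (comp g 0)); rewrite addr0 -compD addr0. Qed.

Lemma comp_big g (I : Type) (s : seq I) (P : pred I) (F : I -> A) :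
  comp g (\sum_(i <- s | P i) F i) = \sum_(i <- s | P i) comp g (F i).
Proof. exact: (big_morph _ (compD grd g) (comp0 g)). Qed.

Lemma compK g a : comp g (comp g a) = comp g a.
Proof. by rewrite comp_comp eqxx. Qed.

Lemma comp_mul_neq0 l m n a b :
  comp l (comp m a * comp n b) != 0 -> d m = r n /\ gm m n = l.
Proof.
have := comp_mul (compK m a) (compK n b).
case: (d m =P r n) => [E|_ ->]; last by rewrite comp0 eqxx.
by move=> <-; rewrite comp_comp; case: (l =P gm m n) => [->|_]; rewrite ?eqxx.
Qed.

(* 1_{r m} is a left unit on A_m: the other components 1_g of 1 act by zero. *)
Lemma comp_unitl m a : comp (r m) 1 * comp m a = comp m a.
Proof.
set b := comp m a; have Hb : comp m b = b by rewrite compK.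
rewrite -{2}Hb -{2}[b]mul1r {2}(comp_sum grd 1) mulr_suml comp_big.
rewrite (bigD1 (r m)) //= big1 ?addr0 => [|g Hg].
  by have := comp_mul (compK (r m) 1) Hb; rewrite gd_r eqxx gmul_r => ->.
have := comp_mul (compK g 1) Hb.
case: (d _ =P r _) => [E|_ ->]; last by rewrite comp0.
move=> <-; rewrite comp_comp; case: (m =P _) => // Em.
by case/eqP: Hg; apply: gmul_cancell.
Qed.

Lemma comp_unitr m a : comp m a * comp (d m) 1 = comp m a.
Proof.
set b := comp m a; have Hb : comp m b = b by rewrite compK.
rewrite -{2}Hb -{2}[b]mulr1 {2}(comp_sum grd 1) mulr_sumr comp_big.
rewrite (bigD1 (d m)) //= big1 ?addr0 => [|g Hg].
  by have := comp_mul Hb (compK (d m) 1); rewrite gr_d eqxx gmul_d => ->.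
have := comp_mul Hb (compK g 1).
case: (d _ =P r _) => [E|_ ->]; last by rewrite comp0.
move=> <-; rewrite comp_comp; case: (m =P _) => // Em.
by case/eqP: Hg; apply: gmul_cancelr.
Qed.

Lemma mulr_unit_d (a : A) f :
  (forall m, comp m a != 0 -> d m = f) -> a * comp f 1 = a.
Proof.
move=> Ha; rewrite [in LHS](comp_sum grd a) mulr_suml [in RHS](comp_sum grd a).
apply: eq_bigr => m _; have [->|nz] := eqVneq (comp m a) 0; first by rewrite mul0r.
by rewrite -(Ha m nz) comp_unitr.
Qed.

(* If every component of a has domain r h, the components a_{k h^-1}, for k with
   d k = d h, recover a (k |-> k h^-1 is a bijection onto {m | d m = r h}). *)
Lemma sum_comp_div (a : A) h : (forall m, comp m a != 0 -> d m = r h) ->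
  \sum_(k | d k == d h) comp (gm k (iv h)) a = a.
Proof.
move=> Ha.
rewrite [in RHS](comp_sum grd a) [in RHS](bigID (fun m => d m == r h)) /=.
rewrite [X in _ = _ + X]big1 ?addr0 => [|m Hm]; last first.
  by apply: contraNeq Hm => /Ha /eqP.
rewrite [in RHS](reindex_onto (fun k => gm k (iv h)) (fun m => gm m h)) /=; last first.
  by move=> m /eqP E; rewrite gmulA ?gr_inv // gmulgV -E gmul_d.
apply: eq_bigl => k; apply/idP/idP => [/eqP E|/andP[/eqP E /eqP M]].
  by rewrite gd_mul ?gr_inv // gd_inv eqxx (gdivK E) eqxx.
by apply/eqP; rewrite -{1}M gd_mul.
Qed.

End LocalUnits.

Section SkewRing.
Variables (G : finGroupoid) (K : comPzRingType) (A : algType K) (grd : grading G A).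
Local Notation d := (@gd G).
Local Notation r := (@gr G).
Local Notation gm := (@gmul G).
Local Notation iv := (@ginv G).
Local Notation comp := (gcomp grd).
Local Notation C0 := (inC0 grd).
Local Notation cm := (cmul grd).

Lemma inC0P (c : Ct G A) g k l : C0 c -> comp l (c g k) != 0 ->
  [/\ d g = r g, d k = d g, r l = d l & d l = r k].
Proof.
move=> Hc; case: (boolP [&& d g == r g, d k == d g, r l == d l & d l == r k]).
  by case/and4P=> /eqP ? /eqP ? /eqP ? /eqP ?.
move=> N /eqP[]; apply: Hc => -[E1 E2 E3 E4].
by case/negP: N; apply/and4P; split; apply/eqP.
Qed.

Lemma inC0_supp (c : Ct G A) g k : C0 c -> c g k != 0 -> d g = r g /\ d k = d g.
Proof.
move=> Hc; case: (boolP ((d g == r g) && (d k == d g))) => [/andP[/eqP ? /eqP ?] //|N].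
rewrite (comp_sum grd (c g k)) big1 ?eqxx // => l _.
by apply: Hc => -[E1 E2 _ _]; case/negP: N; apply/andP; split; apply/eqP.
Qed.

Lemma inC0_suppf (c : Ct G A) g : C0 c -> c g != 0 -> d g = r g.
Proof.
move=> Hc; case: (d g =P r g) => // N; case/eqP; apply/ffunP => k; rewrite ffunE.
by have [//|/(inC0_supp Hc)[]] := eqVneq (c g k) 0.
Qed.

Lemma bmul0l y : bmul grd 0 y = 0.
Proof. by apply/ffunP => h; rewrite !ffunE big1 // => g _; rewrite ?ffunE mul0r. Qed.

Lemma bmul0r x : bmul grd x 0 = 0.
Proof. by apply/ffunP => h; rewrite !ffunE big1 // => g _; rewrite ?ffunE comp0 mulr0. Qed.

Lemma beta0 g : beta g (0 : Bt G A) = 0.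
Proof. by apply/ffunP => h; rewrite !ffunE; case: ifP. Qed.

Lemma cmul_eq0 (x y : Ct G A) t :
  (forall g h, d g = r h -> gm g h = t -> x g = 0 \/ y h = 0) -> cm x y t = 0.
Proof.
move=> H; rewrite ffunE big1 // => g _; rewrite big1 // => h /andP[/eqP E /eqP M].
by case: (H g h E M) => ->; rewrite ?bmul0l // beta0 bmul0r.
Qed.

Lemma cmulE (x y : Ct G A) t k : cm x y t k =
  \sum_g \sum_(h | (d g == r h) && (gm g h == t))
    \sum_(k' | d k' == d k) x g k' * comp (gm k' (iv k)) (beta g (y h) k).
Proof.
rewrite /cmul ffunE sum_ffunE; apply: eq_bigr => g _; rewrite sum_ffunE.
by apply: eq_bigr => h _; rewrite /bmul ffunE.
Qed.

Lemma inC0_mul (x y : Ct G A) : C0 x -> C0 y -> C0 (cm x y).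
Proof.
move=> Hx Hy t h l N; rewrite cmulE !comp_big big1 // => g _.
rewrite comp_big big1 // => g' /andP[/eqP Eg /eqP Mt].
rewrite comp_big big1 // => k /eqP Ek.
rewrite (comp_sum grd (x g k)) mulr_suml comp_big big1 // => m _.
rewrite /beta ffunE; case: (d h =P r g) => [Ehg|_]; last by rewrite comp0 mulr0 comp0.
apply/eqP/negPn/negP => nz; apply: N.
have [Emp Ml] := comp_mul_neq0 nz.
have nzx : comp m (x g k) != 0 by apply: contraNneq nz => ->; rewrite mul0r comp0.
have nzy : comp (gm k (iv h)) (y g' (gm h g)) != 0.
  by apply: contraNneq nz => ->; rewrite mulr0 comp0.
have [X1 X2 X3 X4] := inC0P Hx nzx; have [Y1 Y2 Y3 Y4] := inC0P Hy nzy.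
have Ekh : d k = r (iv h) by rewrite gr_inv.
have Dp := gd_mul Ekh; have Rp := gr_mul Ekh; rewrite gd_inv in Dp.
have Dt := gd_mul Eg; have Rt := gr_mul Eg; rewrite Mt in Dt Rt.
have Dl := gd_mul Emp; have Rl := gr_mul Emp; rewrite Ml in Dl Rl.
have Rhg := gr_mul Ehg.
split; congruence.
Qed.

Lemma cmul_idsuppl (u x : Ct G A) t : (forall g, u g != 0 -> isid g) ->
  cm u x t = bmul grd (u (r t)) (beta (r t) (x t)).
Proof.
move=> Hu; rewrite /cmul ffunE (bigD1 (r t)) //= [X in _ + X]big1 => [|g Hg].
  rewrite addr0 (bigD1 t) /=; last by rewrite gd_r gmul_r !eqxx.
  rewrite big1 ?addr0 // => h /andP[/andP[/eqP E /eqP M] Ht].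
  by case/eqP: Ht; rewrite gd_r in E; rewrite -M E gmul_r.
have [->|nz] := eqVneq (u g) 0; first by rewrite big1 // => h _; rewrite bmul0l.
rewrite big1 // => h /andP[/eqP E /eqP M]; case/eqP: Hg.
by rewrite -M (gr_mul E) (isid_rE (Hu g nz)).
Qed.

Lemma cmul_idsuppr (x v : Ct G A) t : (forall g, v g != 0 -> isid g) ->
  cm x v t = bmul grd (x t) (beta t (v (d t))).
Proof.
move=> Hv; rewrite /cmul ffunE (bigD1 t) //= [X in _ + X]big1 => [|g Hg].
  rewrite addr0 (bigD1 (d t)) /=; last by rewrite gr_d gmul_d !eqxx.
  rewrite big1 ?addr0 // => h /andP[/andP[/eqP E /eqP M] Ht].
  by case/eqP: Ht; apply: gmul_cancelr.
rewrite big1 // => h /andP[/eqP E /eqP M].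
have [->|nz] := eqVneq (v h) 0; first by rewrite beta0 bmul0r.
by case/eqP: Hg; rewrite -M -[h](isid_rE (Hv h nz)) -E gmul_d.
Qed.

End SkewRing.

Section DiagonalUnit.
Variables (G : finGroupoid) (K : comPzRingType) (A : algType K) (grd : grading G A).
Local Notation d := (@gd G).
Local Notation r := (@gr G).
Local Notation iv := (@ginv G).
Local Notation comp := (gcomp grd).
Local Notation C0 := (inC0 grd).
Local Notation cm := (cmul grd).

Variables (P : pred G) (u : Ct G A).
Hypothesis P_id : forall g, P g -> isid g.
Hypothesis u_coef :
  forall g k, u g k = if P g && (d k == g) then comp (r k) 1 else 0.

Lemma diag_unit_supp g : u g != 0 -> isid g.
Proof.
move=> nz; apply: P_id; apply: contraNT nz => nP.
by apply/eqP/ffunP => k; rewrite u_coef ffunE (negbTE nP).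
Qed.

Lemma diag_unit_mull (x : Ct G A) t h : C0 x ->
  cm u x t h = if P (r t) then x t h else 0.
Proof.
move=> Hx; rewrite cmul_idsuppl; last exact: diag_unit_supp.
rewrite /bmul /beta !ffunE gr_r.
case Pt: (P (r t)); last by rewrite big1 // => k _; rewrite u_coef Pt mul0r.
case: (d h =P r t) => [E|NE]; last first.
  rewrite big1 => [|k _]; last by rewrite comp0 mulr0.
  have [->//|/(inC0_supp Hx)[E1 E2]] := eqVneq (x t h) 0.
  by case: NE; rewrite E2.
rewrite -E gmul_d -[RHS](@sum_comp_div _ _ _ grd (x t h) h) => [|m nz]; last first.
  by case: (inC0P Hx nz).
apply: eq_bigr => k /eqP Ek; rewrite u_coef Ek eqxx E Pt /=.
have Ekh : d k = r (iv h) by rewrite gr_inv.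
by rewrite -{1}(gr_mul Ekh) comp_unitl.
Qed.

Lemma diag_unit_mulr (x : Ct G A) t h : C0 x ->
  cm x u t h = if P (d t) then x t h else 0.
Proof.
move=> Hx; rewrite cmul_idsuppr; last exact: diag_unit_supp.
rewrite /bmul /beta !ffunE.
case: (d h =P r t) => [E|NE]; last first.
  rewrite big1 => [|k _]; last by rewrite comp0 mulr0.
  case: (P (d t)) => //.
  have [->//|/(inC0_supp Hx)[E1 E2]] := eqVneq (x t h) 0.
  by case: NE; rewrite E2.
rewrite u_coef (gd_mul E) eqxx andbT (gr_mul E).
case Pt: (P (d t)); last by rewrite big1 // => k _; rewrite comp0 mulr0.
rewrite (bigD1 h) //= big1 ?addr0 => [|k /andP[/eqP Ek Hk]]; last first.
  rewrite comp_comp; case: eqP => [M|_]; last by rewrite mulr0.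
  by case/eqP: Hk; apply: gdiv_eq_r.
rewrite gmulgV compK; apply: mulr_unit_d => m nz.
by case: (inC0P Hx nz).
Qed.

Lemma diag_unit_inC0 : C0 u.
Proof.
move=> g k l N; rewrite u_coef; case: ifP => [/andP[Pg /eqP Ek]|_]; last exact: comp0.
rewrite comp_comp; case: (l =P r k) => [El|_] //; case: N.
have /eqP I := P_id Pg; have R := isid_rE (P_id Pg).
have := gr_r k; have := gd_r k; split; congruence.
Qed.

End DiagonalUnit.

Section Units.
Variables (G : finGroupoid) (K : comPzRingType) (A : algType K) (grd : grading G A).
Local Notation d := (@gd G).
Local Notation r := (@gr G).
Local Notation comp := (gcomp grd).

(* w_e is the diagonal unit of the singleton {e}. *)
Lemma w_e_coef e g k : isid e ->
  w_ grd e g k = if (g == e) && (d k == g) then comp (r k) 1 else 0.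
Proof.
move=> He; rewrite /w_ /delta ffunE; case: (g =P e) => [->|_]; last by rewrite ffunE.
rewrite sum_ffunE /= (eq_bigr (fun f => if (r k == f) && (d k == e) then comp f 1 else 0)).
  case: (d k =P e) => [Ed|_]; last by rewrite big1 // => f _; rewrite andbF.
  rewrite (bigD1 (r k)) ?isid_r //= eqxx /= big1 ?addr0 // => f /andP[_ nf].
  by rewrite eq_sym (negbTE nf).
move=> f _; rewrite sum_ffunE.
case: ifP => [/andP[/eqP Er /eqP Ed]|Hn].
  rewrite (bigD1 k) /=; last by rewrite Er Ed !eqxx.
  rewrite /tens ffunE eqxx big1 ?addr0 // => h /andP[_ nh].
  by rewrite ffunE eq_sym (negbTE nh).
rewrite big1 // => h /andP[/eqP Er /eqP Ed]; rewrite /tens ffunE.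
by case: (k =P h) => // Ek; rewrite Ek Er Ed !eqxx in Hn.
Qed.

(* w is the diagonal unit of the set G_0 of all identities. *)
Lemma w_coef g k : w grd g k = if isid g && (d k == g) then comp (r k) 1 else 0.
Proof.
rewrite /w !sum_ffunE (eq_bigr (fun e => if (g == e) && (d k == g)
                                           then comp (r k) 1 else 0)) => [|e He]; last first.
  by rewrite w_e_coef.
case Ig: (isid g); last first.
  by rewrite big1 // => e He; case: (g =P e) => // Eg; rewrite Eg He in Ig.
rewrite (bigD1 g) //= eqxx /= big1 ?addr0 // => e /andP[_ ne].
by rewrite eq_sym (negbTE ne).
Qed.

End Units.

Section Lemma41.
Variables (G : finGroupoid) (K : comPzRingType) (A : algType K) (grd : grading G A).
Local Notation d := (@gd G).
Local Notation r := (@gr G).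
Local Notation C0 := (inC0 grd).
Local Notation cm := (cmul grd).
Local Notation we := (w_ grd).
Local Notation Ce := (inCe grd).

Lemma inC0_inC c : C0 c -> inC c.
Proof.
move=> Hc g k Hk; have [->//|/(inC0_supp Hc)[E1 E2]] := eqVneq (c g k) 0.
by case: Hk; rewrite E2.
Qed.

Lemma inC0_0 : C0 0.
Proof. by move=> g k l _; rewrite !ffunE comp0. Qed.

Lemma inC0_add x y : C0 x -> C0 y -> C0 (x + y).
Proof. by move=> Hx Hy g k l N; rewrite !ffunE compD Hx ?Hy ?addr0. Qed.

Lemma inC0_scale (a : K) x : C0 x -> C0 (a *: x).
Proof. by move=> Hx g k l N; rewrite !ffunE compZ Hx ?scaler0. Qed.

Let isid_id (g : G) : isid g -> isid g. Proof. by []. Qed.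

Lemma w_inC0 : C0 (w grd).
Proof. exact: diag_unit_inC0 isid_id (w_coef grd). Qed.

Lemma w_mull x : C0 x -> cm (w grd) x = x.
Proof.
move=> Hx; apply/ffunP => t; apply/ffunP => h.
by rewrite (diag_unit_mull isid_id (w_coef grd)) // isid_r.
Qed.

Lemma w_mulr x : C0 x -> cm x (w grd) = x.
Proof.
move=> Hx; apply/ffunP => t; apply/ffunP => h.
by rewrite (diag_unit_mulr isid_id (w_coef grd)) // isid_d.
Qed.

Section FixedIdentity.
Variable e : G.
Hypothesis He : isid e.
Let pred1_id g : pred1 e g -> isid g. Proof. by move=> /eqP ->. Qed.
Let we_coef g k := w_e_coef grd g k He.

Lemma w_e_inC0 : C0 (we e).
Proof. exact: (@diag_unit_inC0 _ _ _ grd _ _ pred1_id we_coef). Qed.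

Lemma w_e_mull x t h : C0 x -> cm (we e) x t h = if r t == e then x t h else 0.
Proof. exact: (@diag_unit_mull _ _ _ grd _ _ pred1_id we_coef). Qed.

Lemma w_e_mulr x t h : C0 x -> cm x (we e) t h = if d t == e then x t h else 0.
Proof. exact: (@diag_unit_mulr _ _ _ grd _ _ pred1_id we_coef). Qed.

(* Since the nonzero coefficients of x in C_0 sit on loops (r g = d g),
   the two cuts agree: w_e is central in C_0. *)
Lemma w_e_central x : C0 x -> cm (we e) x = cm x (we e).
Proof.
move=> Hx; apply/ffunP => t; apply/ffunP => h; rewrite w_e_mull // w_e_mulr //.
have [->|/(inC0_supp Hx)[-> _] //] := eqVneq (x t h) 0.
by rewrite !if_same.
Qed.

Lemma w_e_idem : cm (we e) (we e) = we e.
Proof.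
apply/ffunP => t; apply/ffunP => h; rewrite (w_e_mull _ _ w_e_inC0) we_coef.
by case: (t =P e) => [->|] /=; [rewrite (isid_rE He) eqxx | case: ifP].
Qed.

Lemma inCe_char c : Ce e c <-> C0 c /\ forall g, d g <> e -> c g = 0.
Proof.
split=> [[x [Hx ->]]|[Hc Hs]].
  split=> [|g NE]; first exact: inC0_mul Hx w_e_inC0.
  by apply/ffunP => k; rewrite w_e_mulr // ffunE; case: (d g =P e).
exists c; split=> //; apply/ffunP => t; apply/ffunP => h; rewrite w_e_mulr //.
by case: (d t =P e) => // NE; rewrite Hs // ffunE.
Qed.

End FixedIdentity.

Lemma w_e_orth e f : isid e -> isid f -> e != f -> cm (we e) (we f) = 0.
Proof.
move=> He Hf nef; apply/ffunP => t; apply/ffunP => h.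
rewrite (w_e_mull He _ _ (w_e_inC0 Hf)) w_e_coef // !ffunE.
case: (t =P f) => [->|] /=; last by case: ifP.
by rewrite (isid_rE Hf) eq_sym (negbTE nef).
Qed.

Lemma C0_decomp c : C0 c ->
  exists f : G -> Ct G A, (forall e, isid e -> Ce e (f e)) /\ c = \sum_(e | isid e) f e.
Proof.
move=> Hc; exists (fun e => cm c (we e)); split=> [e He|]; first by exists c.
apply/ffunP => t; apply/ffunP => h; rewrite !sum_ffunE.
rewrite (eq_bigr (fun e => if d t == e then c t h else 0)) => [|e He]; last first.
  by rewrite w_e_mulr.
rewrite (bigD1 (d t)) ?isid_d //= eqxx big1 ?addr0 // => e /andP[_ ne].
by rewrite eq_sym (negbTE ne).
Qed.

(* The sum of the C_e is direct, since they have disjoint supports. *)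
Lemma C0_decomp_unique (f : G -> Ct G A) :
  (forall e, isid e -> Ce e (f e)) -> \sum_(e | isid e) f e = 0 ->
  forall e, isid e -> f e = 0.
Proof.
move=> Hf Hs e He; apply/ffunP => g; rewrite ffunE.
have supp e' : isid e' -> d g <> e' -> f e' g = 0.
  by move=> He' NE; have [_ ->] := (inCe_char He' _).1 (Hf e' He').
case: (d g =P e) => [Eg|NE]; last exact: supp.
have := congr1 (fun c : Ct G A => c g) Hs; rewrite sum_ffunE ffunE (bigD1 e) //=.
rewrite big1 ?addr0 // => e' /andP[He' ne]; apply: supp => // E.
by rewrite -E Eg eqxx in ne.
Qed.

(* Each C_e is an ideal of C_0, since multiplying on either side by elements of
   C_0 (supported on loops) preserves the support {g | d g = e}. *)
Lemma inCe_mul e x c : isid e -> C0 x -> Ce e c -> Ce e (cm x c) /\ Ce e (cm c x).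
Proof.
move=> He Hx /(inCe_char He)[Hc Sc]; split; apply/(inCe_char He).
  split=> [|t NE]; first exact: inC0_mul.
  apply: cmul_eq0 => g h E M; right; apply: Sc.
  by rewrite -M (gd_mul E) in NE.
split=> [|t NE]; first exact: inC0_mul.
apply: cmul_eq0 => g h E M.
case: (d g =P e) => [Eg|NEg]; last by left; apply: Sc.
right; have [//|/(inC0_suppf Hx) Eh] := eqVneq (x h) 0.
by case: NE; rewrite -M (gd_mul E) Eh -E.
Qed.

Lemma inCe_submod e : isid e ->
  [/\ Ce e 0, (forall x y, Ce e x -> Ce e y -> Ce e (x + y))
    & (forall (a : K) x, Ce e x -> Ce e (a *: x))].
Proof.
move=> He; split.
- by apply/(inCe_char He); split=> [|g _]; [exact: inC0_0 | rewrite ffunE].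
- move=> x y /(inCe_char He)[Hx Sx] /(inCe_char He)[Hy Sy].
  apply/(inCe_char He); split=> [|g NE]; first exact: inC0_add.
  by rewrite ffunE Sx // Sy // addr0.
- move=> a x /(inCe_char He)[Hx Sx].
  apply/(inCe_char He); split=> [|g NE]; first exact: inC0_scale.
  by rewrite ffunE Sx // scaler0.
Qed.

Lemma w_e_unit e : isid e ->
  Ce e (we e) /\ forall c, Ce e c -> cm (we e) c = c /\ cm c (we e) = c.
Proof.
move=> He; split.
  apply/(inCe_char He); split=> [|g NE]; first exact: w_e_inC0.
  apply/ffunP => k; rewrite w_e_coef // ffunE.
  by case: (g =P e) => //= Eg; rewrite Eg (eqP He) in NE.
move=> c Hce; have [Hc Sc] := (inCe_char He _).1 Hce.
have Sc' t : d t <> e -> c t = 0 by move=> NE; apply: Sc.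
split; apply/ffunP => t; apply/ffunP => h.
  rewrite w_e_mull //; case: (r t =P e) => // NE.
  have [//|/(inC0_supp Hc)[E1 _]] := eqVneq (c t h) 0.
  by rewrite Sc' ?ffunE // E1.
by rewrite w_e_mulr //; case: (d t =P e) => // NE; rewrite Sc' // ffunE.
Qed.

End Lemma41.

Theorem lemma4p1 (G : finGroupoid) (K : comPzRingType) (A : algType K)
    (gr : grading G A) :
  let C0 := inC0 gr in
  let mul := cmul gr in
  let we := w_ gr in
  (* (i) C_0 is a unital K-subalgebra of C with identity w *)
  [/\ (forall c, C0 c -> inC c),
      [/\ C0 0,
          (forall x y, C0 x -> C0 y -> C0 (x + y)),
          (forall (k : K) x, C0 x -> C0 (k *: x))
        & (forall x y, C0 x -> C0 y -> C0 (mul x y))],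
      C0 (w gr)
    & (forall x, C0 x -> mul (w gr) x = x /\ mul x (w gr) = x)] /\
  (* (ii) the w_e are central orthogonal idempotents of C_0 with sum w *)
  [/\ (forall e, isid e -> C0 (we e)),
      (forall e x, isid e -> C0 x -> mul (we e) x = mul x (we e)),
      (forall e, isid e -> mul (we e) (we e) = we e),
      (forall e f, isid e -> isid f -> e != f -> mul (we e) (we f) = 0)
    & \sum_(e : G | isid e) we e = w gr] /\
  (* (iii) C_0 = (+)_e C_e, C_e = C_0 w_e explicitly described,
     each C_e an ideal of C_0 and a unital algebra with identity w_e *)
  [/\ (forall e c, isid e ->
         inCe gr e c <-> (C0 c /\ forall g, gd g <> e -> c g = 0)),
      (forall c, C0 c -> exists f : G -> {ffun G -> {ffun G -> A}},
         (forall e, isid e -> inCe gr e (f e)) /\ c = \sum_(e : G | isid e) f e),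
      (forall f : G -> {ffun G -> {ffun G -> A}},
         (forall e, isid e -> inCe gr e (f e)) ->
         \sum_(e : G | isid e) f e = 0 -> forall e, isid e -> f e = 0),
      (forall e, isid e ->
         [/\ inCe gr e 0,
             (forall x y, inCe gr e x -> inCe gr e y -> inCe gr e (x + y)),
             (forall (k : K) x, inCe gr e x -> inCe gr e (k *: x)),
             (forall x c, C0 x -> inCe gr e c ->
                inCe gr e (mul x c) /\ inCe gr e (mul c x))
           & (forall c, inCe gr e c -> C0 c)])
    & (forall e, isid e ->
         inCe gr e (we e) /\
         forall c, inCe gr e c -> mul (we e) c = c /\ mul c (we e) = c)].
Proof.
move=> C0 mul we; rewrite /C0 /mul /we {C0 mul we}.
split; [|split].
- split=> [c|||x Hx]; [exact: inC0_inC | | exact: w_inC0 | by rewrite w_mull ?w_mulr].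
  split; [exact: inC0_0 | exact: inC0_add | exact: inC0_scale | exact: inC0_mul].
- split=> // [e|e x He|e|e f].
  + exact: w_e_inC0.
  + exact: w_e_central.
  + exact: w_e_idem.
  + exact: w_e_orth.
- split=> [e c He|c|f|e He|e He].
  + exact: inCe_char.
  + exact: C0_decomp.
  + exact: C0_decomp_unique.
  + have [Ce0 CeD CeZ] := inCe_submod gr He.
    split=> // [x c Hx Hc|c /(inCe_char gr He)[] //]; exact: inCe_mul.
  + exact: w_e_unit.
Qed.
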